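(* Let $K^\flat$ be the completion of an algebraic closure of $\mathbb{F}_p((t))$, with valuation ring $K^{\flat,\circ}$ and residue field $k=\overline{\mathbb{F}_p}$, viewed as a subfield of $K^\flat$. Let $u\in K^{\flat,\circ}$ with $|u|<1$ and let $g\in K^{\flat,\circ}\langle X_1,\dots,X_N\rangle$ be of the form \[g=\sum_{i=0}^\infty g_iu^i\quad\text{with } g_i\in k\langle X_1,\dots,X_N\rangle.\] Then there exists $\varepsilon>0$, depending on $g$, such that for every $x\in k^N$, either $g(x)=0$ or $|g(x)|>\varepsilon$.
   Context: $K^{\flat,\circ}\langle X_1,\dots,X_N\rangle$ is the ring of power series with coefficients in $K^{\flat,\circ}$ tending to $0$. Since $k$ carries the trivial absolute value, $k\langle X_1,\dots,X_N\rangle=k[X_1,\dots,X_N]$; in particular $|h(x)|\in\{0,1\}$ for $h\in k[X_1,\dots,X_N]$ and $x\in k^N$. *)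

From HB Require Import structures.
From mathcomp Require Import all_boot all_order all_algebra.
From mathcomp Require Export mpoly.
From mathcomp Require Export reals.
Set Implicit Arguments. Unset Strict Implicit. Unset Printing Implicit Defensive.
Import Order.TTheory GRing.Theory Num.Theory.
Local Open Scope ring_scope.

Definition nonarch_abs (K : fieldType) (R : realType) (v : K -> R) : Prop :=
  [/\ forall x, 0 <= v x,
      forall x, (v x == 0) = (x == 0),
      forall x y, v (x * y) = v x * v y
    & forall x y, v (x + y) <= Num.max (v x) (v y)].

Definition abs_nontrivial (K : fieldType) (R : realType) (v : K -> R) : Prop :=
  exists x, v x != 0 /\ v x != 1.

Definition abs_cvg_to (K : fieldType) (R : realType) (v : K -> R)
  (s : nat -> K) (y : K) : Prop :=
  forall e : R, 0 < e -> exists n0 : nat, forall n : nat, (n0 <= n)%N ->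
    v (s n - y) < e.

Definition abs_complete (K : fieldType) (R : realType) (v : K -> R) : Prop :=
  forall s : nat -> K,
    (forall e : R, 0 < e -> exists n0 : nat, forall m n : nat,
        (n0 <= m)%N -> (n0 <= n)%N -> v (s m - s n) < e) ->
    exists y, abs_cvg_to v s y.

(* k is an algebraic closure of F_p: algebraically closed, of characteristic p,
   and algebraic over F_p (every element lies in some F_{p^n}). *)
Definition is_alg_closure_Fp (p : nat) (k : closedFieldType) : Prop :=
  p \in [pchar k] /\ forall c : k, exists n : nat, (0 < n)%N /\ c ^+ (p ^ n) = c.

(* iota : k -> K identifies k with the residue field of (K, v):
   |iota c| = 1 for c <> 0, and every element of the valuation ring is
   congruent modulo the maximal ideal to some iota c. *)
Definition residue_field_section (K : fieldType) (R : realType) (v : K -> R)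
  (k : fieldType) (iota : {rmorphism k -> K}) : Prop :=
  (forall c : k, c != 0 -> v (iota c) = 1) /\
  (forall x : K, v x <= 1 -> exists c : k, v (x - iota c) < 1).

Definition series_eval_partial (K : fieldType) (k : fieldType)
  (iota : {rmorphism k -> K}) (N : nat) (gs : nat -> {mpoly k[N]}) (u : K)
  (x : 'I_N -> k) (n : nat) : K :=
  \sum_(i < n) iota ((gs i).@[x]) * u ^+ i.

From mathcomp Require Import all_boot all_order all_algebra.
From mathcomp Require Import mpoly boolp zify lra.
Import Order.TTheory GRing.Theory Num.Theory.
Local Open Scope ring_scope.
Set Implicit Arguments. Unset Strict Implicit.

(* By Hilbert's basis theorem some g_0, ..., g_(n-1) generate the ideal of
   k[X_1, ..., X_N] spanned by all the g_i.  Evaluating at x, either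
   g_i(x) = 0 for all i < n, hence for all i, and g(x) = 0; or the first j
   with g_j(x) <> 0 satisfies j < n.  As |c| = 1 for c in k^x, the term
   g_j(x) u^j then strictly dominates all later ones, so |g(x)| = |u|^j,
   which is bounded below by |u|^(n-1).  Only the ultrametric inequality,
   |c| = 1 on k^x and |u| < 1 are needed. *)

Lemma mem_mkseqP (T : eqType) (f : nat -> T) n x :
  reflect (exists2 i, (i < n)%N & x = f i) (x \in mkseq f n).
Proof.
apply: (iffP mapP) => [[i] | [i i_lt ->]]; first by rewrite mem_iota => i_lt ->; exists i.
by exists i; rewrite // mem_iota.
Qed.

Lemma mem_mkseq (T : eqType) (f : nat -> T) n i : (i < n)%N -> f i \in mkseq f n.
Proof. by move=> i_lt; apply/mem_mkseqP; exists i. Qed.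

Lemma ex_minimal (T : Type) (m : T -> nat) (P : T -> Prop) :
  (exists x, P x) -> exists x, P x /\ forall y, P y -> (m x <= m y)%N.
Proof.
move=> [x Px]; have ex_n : exists n, `[< exists x, P x /\ m x = n >].
  by exists (m x); apply/asboolP; exists x.
case: (ex_minnP ex_n) => n /asboolP [y [Py <-]] y_min; exists y; split=> // z Pz.
by apply: y_min; apply/asboolP; exists z.
Qed.

Lemma minimal_greedy_seq (T : eqType) (Q : T -> Prop) (P : seq T -> T -> Prop)
    (m : T -> nat) :
  (forall l x, P l x -> Q x) ->
  (forall l, {in l, forall x, Q x} -> exists x, P l x) ->
  exists h : nat -> T, forall j,
    P (mkseq h j) (h j) /\ forall y, P (mkseq h j) y -> (m (h j) <= m y)%N.
Proof.
move=> PQ extend; have [x0 _] : exists x, P [::] x by apply: extend => x; rewrite in_nil.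
have /choice [step step_min] : forall l, exists y, {in l, forall x, Q x} ->
    P l y /\ forall z, P l z -> (m y <= m z)%N.
  move=> l; have [lQ|nlQ] := pselect {in l, forall x, Q x}; last by exists x0 => /nlQ.
  by have [y y_min] := ex_minimal m (extend l lQ); exists y => _.
pose fix prefix j := if j is j'.+1 then rcons (prefix j') (step (prefix j')) else [::].
have prefixE j : prefix j = mkseq (step \o prefix) j.
  by elim: j => [|j IH] //=; rewrite mkseqS -IH.
have prefixQ j : {in prefix j, forall x, Q x}.
  elim: j => [|j IH] x //=; rewrite mem_rcons in_cons => /predU1P [->|]; last exact: IH.
  exact: PQ (step_min _ IH).1.
exists (step \o prefix) => j; rewrite -prefixE; exact: step_min.
Qed.

Section IdealMembership.
Variable R : comNzRingType.
Implicit Types (l : seq R) (a p q : R).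

Definition in_ideal l p := exists c : nat -> R, p = \sum_(i < size l) c i * l`_i.

Lemma in_ideal0 l : in_ideal l 0.
Proof. by exists (fun=> 0); rewrite big1 // => i _; rewrite mul0r. Qed.

Lemma in_idealD l p q : in_ideal l p -> in_ideal l q -> in_ideal l (p + q).
Proof.
move=> [c ->] [d ->]; exists (fun i => c i + d i).
by rewrite -big_split; apply: eq_bigr => i _; rewrite mulrDl.
Qed.

Lemma in_idealMl l a p : in_ideal l p -> in_ideal l (a * p).
Proof.
move=> [c ->]; exists (fun i => a * c i).
by rewrite mulr_sumr; apply: eq_bigr => i _; rewrite mulrA.
Qed.

Lemma in_idealB l p q : in_ideal l p -> in_ideal l q -> in_ideal l (p - q).
Proof. by move=> lp lq; rewrite -mulN1r; apply: in_idealD (in_idealMl _ _). Qed.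

Lemma in_ideal_sum l (I : Type) (r : seq I) (F : I -> R) :
  (forall i, in_ideal l (F i)) -> in_ideal l (\sum_(i <- r) F i).
Proof. by move=> lF; apply: big_ind => //; [apply: in_ideal0 | apply: in_idealD]. Qed.

Lemma in_ideal_mem l p : p \in l -> in_ideal l p.
Proof.
move=> pl; have i_p : (index p l < size l)%N by rewrite index_mem.
exists (fun i => (i == index p l)%:R); rewrite (bigD1 (Ordinal i_p)) //=.
rewrite eqxx mul1r nth_index // big1 ?addr0 // => i /negbTE i_neq.
by rewrite -val_eqE /= in i_neq; rewrite i_neq mul0r.
Qed.

Lemma in_ideal_trans l l' p :
  in_ideal l p -> {in l, forall x, in_ideal l' x} -> in_ideal l' p.
Proof.
move=> [c ->] ll'; apply: in_ideal_sum => i; apply: in_idealMl; apply: ll'.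
exact: mem_nth.
Qed.

Lemma in_ideal_eq0 l p : in_ideal l p -> {in l, forall x, x = 0} -> p = 0.
Proof.
move=> [c ->] l0; rewrite big1 // => i _.
by rewrite (l0 l`_i) ?mulr0 // mem_nth.
Qed.

Lemma in_ideal_mkseq_mono (f : nat -> R) m n p :
  (m <= n)%N -> in_ideal (mkseq f m) p -> in_ideal (mkseq f n) p.
Proof.
move=> mn /in_ideal_trans; apply=> _ /mem_mkseqP [i im ->].
by apply: in_ideal_mem; rewrite mem_mkseq // (leq_trans im).
Qed.

Definition ideal_closed (J : R -> Prop) :=
  forall l p, {in l, forall x, J x} -> in_ideal l p -> J p.

End IdealMembership.

Lemma in_ideal_rmorph (A B : comNzRingType) (phi : {rmorphism A -> B}) l p :
  in_ideal l p -> in_ideal (map phi l) (phi p).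
Proof.
move=> [c ->]; exists (phi \o c); rewrite size_map rmorph_sum.
by apply: eq_bigr => i _; rewrite rmorphM (nth_map 0).
Qed.

(* The ascending chain condition, for the chain of ideals generated by the
   initial segments of a sequence. *)
Definition noetherian (R : comNzRingType) :=
  forall f : nat -> R, exists n, forall m, in_ideal (mkseq f n) (f m).

Section HilbertBasis.
Variable R : comNzRingType.

Lemma poly_lead_reduce (l : seq {poly R}) (p : {poly R}) :
  p != 0 -> {in l, forall x : {poly R}, (size x <= size p)%N} ->
  in_ideal (map lead_coef l) (lead_coef p) ->
  exists2 q, in_ideal l q & (size (p - q)%R < size p)%N.
Proof.
move=> p_neq0 size_l [c lead_p].
have sp_gt0 : (0 < size p)%N by rewrite size_poly_gt0.
pose shift (x : {poly R}) := 'X^(size p - size x) * x.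
have size_shift x : x \in l -> (size (shift x) <= size p)%N.
  rewrite /shift => /size_l; have := size_polyMleq 'X^(size p - size x) x.
  rewrite size_polyXn; lia.
have top_shift x : x \in l -> (shift x)`_(size p).-1 = lead_coef x.
  move/size_l => sx; rewrite coefXnM lead_coefE; case: ltnP => [lt_sx|ge_sx].
    have/eqP -> : x == 0 by rewrite -size_poly_eq0; lia.
    by rewrite coef0.
  by have -> : ((size p).-1 - (size p - size x) = (size x).-1)%N by lia.
pose q := \sum_(i < size l) (c i)%:P * shift l`_i.
exists q.
  apply: in_ideal_sum => i; rewrite mulrA; apply: in_idealMl; apply: in_ideal_mem.
  exact: mem_nth.
have size_pq : (size (p - q)%R <= size p)%N.
  rewrite (leq_trans (size_polyD _ _)) // geq_max leqnn size_polyN /q.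
  apply: (big_ind (fun r : {poly R} => size r <= size p)%N) => [|x y sx sy|i _].
  - by rewrite size_poly0.
  - by rewrite (leq_trans (size_polyD _ _)) // geq_max sx.
  - by rewrite mul_polyC (leq_trans (size_scale_leq _ _)) ?size_shift ?mem_nth.
have top_pq : (p - q)`_(size p).-1 = 0.
  apply/eqP; rewrite coefB subr_eq0 -lead_coefE lead_p size_map /q coef_sum; apply/eqP.
  by apply: eq_bigr => i _; rewrite coefCM top_shift ?mem_nth // (nth_map 0).
rewrite ltn_neqAle size_pq andbT; apply/eqP => size_eq.
move: top_pq; rewrite -size_eq -lead_coefE => /eqP; rewrite lead_coef_eq0 => /eqP pq0.
by move: sp_gt0; rewrite -size_eq pq0 size_poly0.
Qed.

Hypothesis noethR : noetherian R.

Lemma poly_ideal_finitely_generated (J : {poly R} -> Prop) :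
  ideal_closed J ->
  exists2 l : seq {poly R}, {in l, forall x, J x} & forall p, J p -> in_ideal l p.
Proof.
(* Otherwise pick h_j in J \ (h_0, ..., h_(j-1)) of minimal degree.  The
   leading coefficients of the h_j stabilise in R, so cancelling the leading
   term of some h_n gives an element of J \ (h_0, ..., h_(n-1)) of smaller
   degree. *)
move=> J_ideal; apply: contrapT => not_fg.
have extend l : {in l, forall x, J x} -> exists p, J p /\ ~ in_ideal l p.
  move=> lJ; apply: contrapT => none; apply: not_fg; exists l => // p Jp.
  by apply: contrapT => l_p; apply: none; exists p.
have [h h_min] := @minimal_greedy_seq _ J (fun l p => J p /\ ~ in_ideal l p)
  (fun p : {poly R} => size p) (fun _ _ => @proj1 _ _) extend.
have Jh j : J (h j) by have [[]] := h_min j.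
have h_notin j : ~ in_ideal (mkseq h j) (h j) by have [[]] := h_min j.
have size_h i j : (i < j)%N -> (size (h i) <= size (h j))%N.
  move=> ij; apply: (h_min i).2; split=> [|hi]; first exact: Jh.
  exact/(h_notin j)/(in_ideal_mkseq_mono (ltnW ij)).
have [n lead_n] := noethR (lead_coef \o h).
have [q q_in size_r] : exists2 q, in_ideal (mkseq h n) q &
    (size (h n - q)%R < size (h n))%N.
  apply: poly_lead_reduce; last by rewrite /mkseq -map_comp; apply: lead_n.
    by apply/eqP => hn0; apply: (h_notin n); rewrite hn0; apply: in_ideal0.
  by move=> _ /mem_mkseqP [i i_lt ->]; apply: size_h.
have : (size (h n) <= size (h n - q)%R)%N.
  apply: (h_min n).2; split.
    apply: (J_ideal (mkseq h n.+1)) => [_ /mem_mkseqP [i _ ->] //|].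
    apply: in_idealB; first by apply: in_ideal_mem; apply: mem_mkseq.
    exact: in_ideal_mkseq_mono q_in.
  by move=> r_in; apply: (h_notin n); rewrite -(subrK q (h n)); apply: in_idealD.
by rewrite leqNgt size_r.
Qed.

Theorem noetherian_poly : noetherian {poly R}.
Proof.
move=> f; pose J p := exists n, in_ideal (mkseq f n) p.
have bound (l : seq {poly R}) : {in l, forall x, J x} ->
    exists n, {in l, forall x, in_ideal (mkseq f n) x}.
  elim: l => [|x l IH] lJ; first by exists 0%N.
  have [n1 x_in] := lJ x (mem_head x l).
  have [n2 l_in] : exists n, {in l, forall y, in_ideal (mkseq f n) y}.
    by apply: IH => y yl; apply: lJ; rewrite in_cons yl orbT.
  exists (maxn n1 n2) => y; rewrite in_cons => /predU1P [->|yl].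
    exact: in_ideal_mkseq_mono (leq_maxl _ _) x_in.
  exact: in_ideal_mkseq_mono (leq_maxr _ _) (l_in y yl).
have [l lJ l_gen] : exists2 l, {in l, forall x, J x} & forall p, J p -> in_ideal l p.
  apply: poly_ideal_finitely_generated => l p lJ l_p.
  by have [n l_in] := bound l lJ; exists n; apply: in_ideal_trans l_p l_in.
have [n l_in] := bound l lJ; exists n => m; apply: in_ideal_trans (l_gen _ _) l_in.
by exists m.+1; apply: in_ideal_mem; apply: mem_mkseq.
Qed.

End HilbertBasis.

Lemma noetherian_field (F : fieldType) : noetherian F.
Proof.
move=> f; have [[i fi_neq0]|f_eq0] := pselect (exists i, f i != 0).
  exists i.+1 => m; rewrite -(divfK fi_neq0 (f m)); apply: in_idealMl.
  by apply: in_ideal_mem; apply: mem_mkseq.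
exists 0%N => m; have -> : f m = 0 by apply: contrapT => fm; apply: f_eq0; exists m; apply/eqP.
exact: in_ideal0.
Qed.

Lemma noetherian_surj (A B : comNzRingType) (phi : {rmorphism A -> B}) :
  (forall b, exists a, phi a = b) -> noetherian A -> noetherian B.
Proof.
move=> /choice [pre phiK] noethA g; have [n gen] := noethA (pre \o g).
exists n => m; have := in_ideal_rmorph phi (gen m).
by rewrite /mkseq -map_comp /= phiK (eq_map (g := g)) // => i /=; rewrite phiK.
Qed.

Lemma rmorph_mpoly_surj (A : pzRingType) (R : nzRingType) n
    (phi : {rmorphism A -> {mpoly R[n]}}) :
  (forall c, exists a, phi a = c%:MP) -> (forall i, exists a, phi a = 'X_i) ->
  forall p, exists a, phi a = p.
Proof.
move=> phiC phiX; pose im p := exists a, phi a = p.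
have imD p q : im p -> im q -> im (p + q).
  by move=> [a <-] [b <-]; exists (a + b); rewrite rmorphD.
have imM p q : im p -> im q -> im (p * q).
  by move=> [a <-] [b <-]; exists (a * b); rewrite rmorphM.
have im1 : im 1 by exists 1; rewrite rmorph1.
have imXm m : im 'X_[m].
  rewrite mpolyXE_id; apply: big_ind => // i _.
  by elim: (m i) => [|e IH]; rewrite ?expr0 // exprS; apply: imM.
elim/mpolyind => [|c m p _ _ imp]; first by exists 0; rewrite rmorph0.
by apply: imD imp; rewrite -mul_mpolyC; apply: imM.
Qed.

Theorem noetherian_mpoly (R : comNzRingType) n :
  noetherian R -> noetherian {mpoly R[n]}.
Proof.
move=> noethR; elim: n => [|n IH].
  apply: (noetherian_surj (phi := @mpolyC 0 R)) noethR.
  by apply: rmorph_mpoly_surj => [c|[]//]; exists c.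
pose phi := horner_eval ('X_ord_max : {mpoly R[n.+1]}) \o map_poly (@mwiden n R).
apply: (noetherian_surj (phi := phi)); last exact: noetherian_poly.
apply: rmorph_mpoly_surj => [c|i].
  by exists c%:MP%:P; rewrite /= map_polyC /horner_eval hornerC; apply: mwidenC.
case: (unliftP ord_max i) => [j ->|->]; last first.
  by exists 'X; rewrite /= map_polyX /horner_eval hornerX.
exists ('X_j)%:P; rewrite /= map_polyC /horner_eval hornerC.
rewrite -[LHS]/(mwiden _) mwidenX mnmwiden1.
by congr ('X_ _); apply: val_inj; exact: esym (lift_max j).
Qed.

Section NonArchimedeanAbs.
Variables (K : fieldType) (R : realType) (v : K -> R).
Hypothesis v_abs : nonarch_abs v.

Lemma abs_ge0 x : 0 <= v x. Proof. by case: v_abs. Qed.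

Lemma abs_eq0 x : (v x == 0) = (x == 0). Proof. by case: v_abs. Qed.

Lemma absM x y : v (x * y) = v x * v y. Proof. by case: v_abs. Qed.

Lemma abs_ultrametric x y : v (x + y) <= Num.max (v x) (v y). Proof. by case: v_abs. Qed.

Lemma abs0 : v 0 = 0. Proof. by apply/eqP; rewrite abs_eq0. Qed.

Lemma abs_gt0 x : (0 < v x) = (x != 0).
Proof. by rewrite lt_def abs_ge0 abs_eq0 andbT. Qed.

Lemma abs1 : v 1 = 1.
Proof.
have v1_gt0 : 0 < v 1 by rewrite abs_gt0 oner_neq0.
by apply: (mulfI (lt0r_neq0 v1_gt0)); rewrite -absM !mulr1.
Qed.

Lemma absX x i : v (x ^+ i) = v x ^+ i.
Proof. by elim: i => [|i IH]; rewrite ?expr0 ?abs1 // !exprS absM IH. Qed.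

Lemma absN x : v (- x) = v x.
Proof.
have vN1 : v (-1) = 1.
  apply/eqP; rewrite -(@pexpr_eq1 _ _ 2) ?abs_ge0 // -absX.
  by rewrite sqrrN expr1n abs1.
by rewrite -mulN1r absM vN1 mul1r.
Qed.

Lemma abs_addr_eq x y : v y < v x -> v (x + y) = v x.
Proof.
move=> lt_yx; apply/eqP; rewrite eq_le.
rewrite (le_trans (abs_ultrametric _ _)) ?ge_max ?lexx ?(ltW lt_yx) //=.
have := abs_ultrametric (x + y) (- y); rewrite addrK absN le_max.
by case/orP => // /(lt_le_trans lt_yx); rewrite ltxx.
Qed.

Lemma abs_sum_lt (I : Type) (r : seq I) (P : pred I) (F : I -> K) w :
  0 < w -> (forall i, P i -> v (F i) < w) -> v (\sum_(i <- r | P i) F i) < w.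
Proof.
move=> w_gt0 F_lt; apply: (big_ind (fun x => v x < w)) => //; first by rewrite abs0.
by move=> x y x_lt y_lt; rewrite (le_lt_trans (abs_ultrametric _ _)) // gt_max x_lt.
Qed.

Lemma abs_sum_lead (t : nat -> K) j n :
  (j < n)%N -> t j != 0 -> (forall i, (i < j)%N -> t i = 0) ->
  (forall i, (j < i)%N -> v (t i) < v (t j)) ->
  v (\sum_(i < n) t i) = v (t j).
Proof.
move=> jn tj_neq0 t_lt t_gt; rewrite (bigD1 (Ordinal jn)) //= abs_addr_eq //.
apply: abs_sum_lt => [|i]; first by rewrite abs_gt0.
rewrite -val_eqE /=; case: ltngtP => // [ij|ji] _; last exact: t_gt.
by rewrite t_lt // abs0 abs_gt0.
Qed.

Lemma abs_lim_eventually_const (s : nat -> K) gx w n0 :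
  (forall n, (n0 <= n)%N -> v (s n) = w) -> abs_cvg_to v s gx -> v gx = w.
Proof.
move=> s_w cvg; have [gx0|gx_neq0] := eqVneq gx 0.
  rewrite {}gx0 in cvg *.
  have w_ge0 : 0 <= w by rewrite -(s_w n0) ?abs_ge0.
  apply/eqP; rewrite abs0 eq_le w_ge0 leNgt; apply/negP => w_gt0.
  have [n1 close] := cvg w w_gt0.
  by have := close (maxn n0 n1) (leq_maxr _ _); rewrite subr0 s_w ?leq_maxl ?ltxx.
have gx_gt0 : 0 < v gx by rewrite abs_gt0.
have [n1 close] := cvg (v gx) gx_gt0.
rewrite -(s_w (maxn n0 n1)) ?leq_maxl // -[s _](subrK gx) addrC abs_addr_eq //.
exact: close (leq_maxr _ _).
Qed.

End NonArchimedeanAbs.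

Lemma abs_residue_series_lead (K k : fieldType) (R : realType) (v : K -> R)
    (iota : {rmorphism k -> K}) (u : K) (c : nat -> k) j n :
  nonarch_abs v -> (forall a, a != 0 -> v (iota a) = 1) -> v u < 1 ->
  c j != 0 -> (forall i, (i < j)%N -> c i = 0) -> (j < n)%N ->
  v (\sum_(i < n) iota (c i) * u ^+ i) = v u ^+ j.
Proof.
move=> v_abs abs_iota u_lt1 cj_neq0 c_lt jn.
have [uj0|uj_neq0] := eqVneq (u ^+ j) 0.
  rewrite -absX // uj0 big1 // => i _; case: (ltnP i j) => [ij|ji].
    by rewrite c_lt // rmorph0 mul0r.
  by rewrite -(subnKC ji) exprD uj0 mul0r mulr0.
have abs_term i : c i != 0 -> v (iota (c i) * u ^+ i) = v u ^+ i.
  by move=> ci_neq0; rewrite absM // absX // abs_iota // mul1r.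
rewrite (abs_sum_lead v_abs (t := fun i => iota (c i) * u ^+ i) jn) ?abs_term //.
- by rewrite mulf_neq0 // fmorph_eq0.
- by move=> i ij; rewrite c_lt // rmorph0 mul0r.
move=> i ji; have uj_gt0 : 0 < v u ^+ j by rewrite -absX // abs_gt0.
have [->|ci_neq0] := eqVneq (c i) 0; first by rewrite rmorph0 mul0r abs0.
rewrite abs_term // (le_lt_trans (ler_wiXn2l (abs_ge0 v_abs u) (ltW u_lt1) ji)) //.
by rewrite exprS gtr_pMl.
Qed.

Lemma exists_lt_pos_powers (R : realFieldType) (rho : R) n :
  0 <= rho -> rho <= 1 ->
  exists2 eps, 0 < eps & forall j, (j < n)%N -> 0 < rho ^+ j -> eps < rho ^+ j.
Proof.
move=> rho_ge0 rho_le1; have [->|rho_neq0] := eqVneq rho 0.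
  exists (1 / 2) => [|[|j] _]; rewrite ?expr0 ?expr0n ?ltxx //; lra.
have rhon_gt0 : 0 < rho ^+ n by rewrite exprn_gt0 // lt_def rho_neq0.
exists (rho ^+ n / 2) => [|j jn _]; first by rewrite divr_gt0.
have : rho ^+ n <= rho ^+ j by rewrite ler_wiXn2l // ltnW.
lra.
Qed.

Lemma prefix_eq0_or_first_neq0 (V : zmodType) (c : nat -> V) n :
  (forall i, (i < n)%N -> c i = 0) \/
  exists j, [/\ (j < n)%N, c j != 0 & forall i, (i < j)%N -> c i = 0].
Proof.
have [ex|none] := pselect (exists j, (j < n)%N && (c j != 0)); [right | left].
  case: (ex_minnP ex) => j /andP [jn cj_neq0] j_min; exists j; split=> // i ij.
  have i_lt := ltn_trans ij jn; apply/eqP; apply: contraTT ij => ci_neq0.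
  by rewrite -leqNgt j_min // i_lt.
move=> i i_lt; apply/eqP; apply: contrapT => /negP ci_neq0.
by apply: none; exists i; rewrite i_lt.
Qed.

Theorem mainTheorem8 (R : realType) (p : nat) (K : closedFieldType)
  (v : K -> R) (k : closedFieldType) (iota : {rmorphism k -> K})
  (N : nat) (u : K) (gs : nat -> {mpoly k[N]}) :
  prime p ->
  p \in [pchar K] ->
  nonarch_abs v -> abs_nontrivial v -> abs_complete v ->
  is_alg_closure_Fp p k ->
  residue_field_section v iota ->
  v u < 1 ->
  exists eps : R, 0 < eps /\
    forall (x : 'I_N -> k) (gx : K),
      abs_cvg_to v (series_eval_partial iota gs u x) gx ->
      gx = 0 \/ eps < v gx.
Proof.
move=> _ _ v_abs _ _ _ [abs_iota _] u_lt1.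
have [n0 gs_gen] := noetherian_mpoly (@noetherian_field k) gs.
have [eps eps_gt0 eps_lt] := exists_lt_pos_powers n0 (abs_ge0 v_abs u) (ltW u_lt1).
exists eps; split=> // x gx cvg; pose c i := (gs i).@[x].
have c_gen m : in_ideal (mkseq c n0) (c m).
  by have := in_ideal_rmorph (meval x) (gs_gen m); rewrite /mkseq -map_comp.
have [c0|[j [jn cj_neq0 c_lt]]] := prefix_eq0_or_first_neq0 c n0.
  have c_eq0 m : (gs m).@[x] = 0.
    by apply: in_ideal_eq0 (c_gen m) _ => _ /mem_mkseqP [i /c0 ci0 ->].
  left; apply/eqP; rewrite -(abs_eq0 v_abs); apply/eqP.
  apply: (abs_lim_eventually_const v_abs (n0 := 0)) cvg => n _.
  by rewrite /series_eval_partial big1 ?abs0 // => i _; rewrite c_eq0 rmorph0 mul0r.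
have v_gx : v gx = v u ^+ j.
  apply: (abs_lim_eventually_const v_abs (n0 := j.+1)) cvg => n jn'.
  exact: (abs_residue_series_lead v_abs abs_iota u_lt1 cj_neq0 c_lt jn').
have [gx0|gx_neq0] := eqVneq gx 0; [by left | right].
by rewrite v_gx eps_lt // -v_gx abs_gt0.
Qed.
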